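(* Let $K\subset\mathbb{R}^n$ be closed and consider $\Sigma:\ \dot x\in F(x),\ x\in C$, satisfying (SA), such that $F(y)\subset T_K(y)$ for all $y\in\partial K\cap\operatorname{int}(C)$. Let $\phi$ be a solution to $\Sigma$ with $\phi(0)=x\in\partial K$ satisfying property $(\star)$ with some $T>0$. Then $\phi([0,T])\subset K$; in particular $\phi$ does not leave $K$ immediately.
   Context: Standing assumption (SA): $C \subset \mathbb{R}^n$ is closed; $F:\mathbb{R}^n \rightrightarrows \mathbb{R}^n$ has $F(x)$ nonempty, closed and convex for all $x \in C$; $F$ is continuous (upper and lower semicontinuous) and one-sided locally Lipschitz: for every nonempty compact $\mathcal{N} \subset \operatorname{dom} F$ there is $k>0$ with $(x_1-x_2)^\top F(x_1) \subset (x_1-x_2)^\top F(x_2) + k|x_1-x_2|^2\mathbb{B}$ for all $x_1,x_2 \in \mathcal{N}$ ($\mathbb{B}$ the closed unit ball). Solutions: $\phi$ is locally absolutely continuous with values in $C$, $\operatorname{dom}\phi=[0,T]$ ($T\ge0$) or $[0,T)$ ($T\in\mathbb{R}_{\ge0}\cup\{+\infty\}$), and $\dot\phi(t)\in F(\phi(t))$ for a.e. $t\in\operatorname{dom}\phi$. A solution $\phi$ with $\phi(0)=x$ leaves $K$ immediately if there is $T>0$ with $\phi((0,T])\subset C\setminus K$. Property $(\star)$ for a solution $\phi$: there exists $T>0$ with $(0,T]\subset\operatorname{dom}\phi$ such that $\operatorname{Proj}_{\partial K}(\phi(t))\cap\operatorname{int}(C)\neq\emptyset$ for all $t\in(0,T]$,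 where $\operatorname{Proj}_{S}(z)$ denotes the set of points of $S$ at minimal Euclidean distance from $z$. Contingent cone: $T_S(x)=\{v: \exists t_i\to 0^+, \exists v_i\to v,\ x+t_iv_i\in S\}$. *)

From HB Require Import structures.
From mathcomp Require Import all_boot all_order all_algebra.
From mathcomp Require Import all_classical all_reals all_analysis.
Set Implicit Arguments. Unset Strict Implicit. Unset Printing Implicit Defensive.
Import Order.TTheory GRing.Theory Num.Theory.
Import numFieldNormedType.Exports.
Local Open Scope classical_set_scope.
Local Open Scope ring_scope.

Section Defs.
Variables (R : realType) (n : nat).
Local Notation V := 'rV[R]_n.

Definition dotv (x y : V) : R := \sum_(i < n) x ord0 i * y ord0 i.
Definition enorm (x : V) : R := Num.sqrt (dotv x x).

Definition boundary (K : set V) : set V := closure K `\` interior K.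

Definition convex_vset (A : set V) : Prop :=
  forall x y (l : R), A x -> A y -> 0 <= l -> l <= 1 -> A (l *: x + (1 - l) *: y).

Definition domF (F : V -> set V) : set V := [set x | F x !=set0].

Definition usc_at (C : set V) (F : V -> set V) (x : V) : Prop :=
  forall U : set V, open U -> F x `<=` U ->
    \forall y \near x, C y -> F y `<=` U.
Definition lsc_at (C : set V) (F : V -> set V) (x : V) : Prop :=
  forall U : set V, open U -> F x `&` U !=set0 ->
    \forall y \near x, C y -> F y `&` U !=set0.

(* one-sided local Lipschitz property:
   (x1-x2)^T F(x1) ⊂ (x1-x2)^T F(x2) + k|x1-x2|^2 B *)
Definition one_sided_loc_lipschitz (F : V -> set V) : Prop :=
  forall N : set V, N !=set0 -> compact N -> N `<=` domF F ->
    exists k : R, 0 < k /\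
      forall x1 x2, N x1 -> N x2 ->
        forall v1, F x1 v1 ->
          exists v2, F x2 v2 /\ exists b : R, -1 <= b <= 1 /\
            dotv (x1 - x2) v1 = dotv (x1 - x2) v2 + k * enorm (x1 - x2) ^+ 2 * b.

Definition standing_assumption (C : set V) (F : V -> set V) : Prop :=
  [/\ closed C,
      (forall x, C x -> F x !=set0 /\ closed (F x) /\ convex_vset (F x)),
      (forall x, C x -> usc_at C F x /\ lsc_at C F x)
    & one_sided_loc_lipschitz F].

Definition abs_cont_on (phi : R -> V) (a b : R) : Prop :=
  forall e : R, 0 < e -> exists d : R, 0 < d /\
    forall (m : nat) (s t : 'I_m -> R),
      (forall i, a <= s i /\ s i <= t i /\ t i <= b) ->
      (forall i j, i != j -> t i <= s j \/ t j <= s i) ->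
      \sum_(i < m) (t i - s i) < d ->
      \sum_(i < m) enorm (phi (t i) - phi (s i)) < e.

Definition loc_abs_cont_on (phi : R -> V) (D : set R) : Prop :=
  forall a b, a <= b -> [set t | a <= t <= b] `<=` D -> abs_cont_on phi a b.

Definition solution_domain (D : set R) : Prop :=
  (exists T : R, 0 <= T /\ D = [set t | 0 <= t <= T]) \/
  (exists T : \bar R, (0 <= T)%E /\ D = [set t | 0 <= t /\ (t%:E < T)%E]).

Definition is_solution (C : set V) (F : V -> set V) (phi : R -> V) (D : set R) : Prop :=
  [/\ solution_domain D,
      loc_abs_cont_on phi D,
      (forall t, D t -> C (phi t))
    & \forall t \ae (@lebesgue_measure R),
        D t -> derivable phi t 1 /\ F (phi t) ('D_1 phi t)].

Definition leaves_immediately (C K : set V) (phi : R -> V) (D : set R) : Prop :=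
  exists T : R, 0 < T /\ [set t | 0 < t <= T] `<=` D /\
    (forall t, 0 < t <= T -> (C `\` K) (phi t)).

Definition Proj (S : set V) (z : V) : set V :=
  [set y | S y /\ forall w, S w -> enorm (z - y) <= enorm (z - w)].

Definition contingent (S : set V) (x : V) : set V :=
  [set v | exists (t : nat -> R) (w : nat -> V),
     (forall i, 0 < t i) /\ t @ \oo --> 0 /\ w @ \oo --> v /\
     (forall i, S (x + t i *: w i))].

End Defs.

From HB Require Import structures.
From mathcomp Require Import all_boot all_order all_algebra.
From mathcomp Require Import all_classical all_reals all_analysis.
From mathcomp Require Import ring lra.
Import Order.TTheory GRing.Theory Num.Theory.
Import numFieldNormedType.Exports.
Local Open Scope classical_set_scope.
Local Open Scope ring_scope.
Set Implicit Arguments. Unset Strict Implicit.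

(** Let [G t] be the squared distance from [phi t] to [K]. When [phi t] is
    outside [K], property (star) gives a nearest boundary point [y] in
    [int C]; it is a nearest point of [K], [F y] is tangent to [K] at [y], and
    the one-sided Lipschitz condition turns [<phi t - y, v2> <= 0] for
    [v2 \in F y] into [<phi t - y, phi' t> <= k G t]. Hence almost everywhere
    the upper right Dini derivative of [G] is at most [2 k sup G]; as [G] is
    (one-sidedly) absolutely continuous, on a short interval [[a, a + tau]]
    starting in [K] this gives [sup G <= 2 k tau sup G <= sup G / 2], so
    [G = 0] there. Real induction on [[0, T]] concludes. *)

Section Euclid.
Variables (R : realType) (n : nat).
Local Notation V := 'rV[R]_n.
Implicit Types x y a b c : V.

Lemma dotvC a b : dotv a b = dotv b a.
Proof. by rewrite /dotv; apply: eq_bigr => i _; rewrite mulrC. Qed.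

Lemma dotvDr a b c : dotv a (b + c) = dotv a b + dotv a c.
Proof. by rewrite /dotv -big_split; apply: eq_bigr => i _; rewrite mxE mulrDr. Qed.

Lemma dotvDl a b c : dotv (b + c) a = dotv b a + dotv c a.
Proof. by rewrite dotvC dotvDr !(dotvC a). Qed.

Lemma dotvZr (l : R) a b : dotv a (l *: b) = l * dotv a b.
Proof. by rewrite /dotv mulr_sumr; apply: eq_bigr => i _; rewrite mxE; ring. Qed.

Lemma dotvZl (l : R) a b : dotv (l *: a) b = l * dotv a b.
Proof. by rewrite dotvC dotvZr dotvC. Qed.

Lemma dotvNr a b : dotv a (- b) = - dotv a b.
Proof. by rewrite -scaleN1r dotvZr mulN1r. Qed.

Lemma dotvNl a b : dotv (- a) b = - dotv a b.
Proof. by rewrite dotvC dotvNr dotvC. Qed.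

Lemma dotv0r a : dotv a 0 = 0.
Proof. by rewrite /dotv big1 // => i _; rewrite mxE mulr0. Qed.

Lemma dotvvN a : dotv (- a) (- a) = dotv a a.
Proof. by rewrite dotvNl dotvNr opprK. Qed.

Lemma dotvvZ (l : R) a : dotv (l *: a) (l *: a) = l ^+ 2 * dotv a a.
Proof. by rewrite dotvZl dotvZr mulrA expr2. Qed.

Lemma dotvvD a b : dotv (a + b) (a + b) = dotv a a + 2 * dotv a b + dotv b b.
Proof. rewrite dotvDl !dotvDr (dotvC b a); ring. Qed.

Lemma dotvv_ge0 x : 0 <= dotv x x.
Proof. by rewrite /dotv sumr_ge0 // => i _; rewrite -expr2 sqr_ge0. Qed.

Lemma enorm_ge0 x : 0 <= enorm x.
Proof. exact: sqrtr_ge0. Qed.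

Lemma enorm_sq x : enorm x ^+ 2 = dotv x x.
Proof. by rewrite /enorm sqr_sqrtr // dotvv_ge0. Qed.

Lemma dotvv_le_enorm x y : enorm x <= enorm y -> dotv x x <= dotv y y.
Proof. by move=> h; rewrite -!enorm_sq !expr2 ler_pM // enorm_ge0. Qed.

(** The topology of ['rV[R]_n] comes from the sup norm [`|x|], not from [enorm]. *)

Lemma normr_coord_le x i : `|x ord0 i| <= `|x|.
Proof.
rewrite [leRHS]/Num.norm /= mx_normrE.
exact: (@le_bigmax _ _ _ 0 (fun ij : 'I_1 * 'I_n => `|x ij.1 ij.2|) (ord0, i)).
Qed.

Lemma normr_le_coord x r : 0 <= r -> (forall i, `|x ord0 i| <= r) -> `|x| <= r.
Proof.
move=> r0 H; rewrite [leLHS]/Num.norm /= mx_normrE; apply: bigmax_le => // -[i j] _ /=.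
by rewrite (ord1 i); apply: H.
Qed.

Lemma normr_dotv_le a b : `|dotv a b| <= n%:R * (`|a| * `|b|).
Proof.
rewrite /dotv; apply: le_trans (ler_norm_sum _ _ _) _.
rewrite mulr_natl -[n in _ *+ n]card_ord -sumr_const; apply: ler_sum => i _.
by rewrite normrM ler_pM ?normr_coord_le.
Qed.

Lemma dotvv_le_normr x : dotv x x <= n%:R * `|x| ^+ 2.
Proof. by rewrite expr2; apply: le_trans (ler_norm _) (normr_dotv_le x x). Qed.

Lemma normr_le_dotvv x r : 0 <= r -> dotv x x <= r ^+ 2 -> `|x| <= r.
Proof.
move=> r0 H; apply: normr_le_coord => // i.
rewrite -(ler_pXn2r (_ : (0 < 2)%N)) ?nnegrE ?normr_ge0 // real_normK ?num_real //.
apply: le_trans H; rewrite /dotv (bigD1 i) //= -expr2 lerDl sumr_ge0 // => j _.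
by rewrite -expr2 sqr_ge0.
Qed.

Lemma normr_le_enorm x : `|x| <= enorm x.
Proof. by apply: normr_le_dotvv; rewrite ?enorm_ge0 // enorm_sq. Qed.

End Euclid.

Section RealInterval.
Variable R : realType.

Lemma real_induction (a b : R) (P : R -> Prop) : a <= b -> P a ->
  (forall s, a < s <= b -> (forall u, a <= u < s -> P u) -> P s) ->
  (forall s, a <= s < b -> P s ->
     exists2 d, 0 < d & forall u, s < u <= b -> u < s + d -> P u) ->
  forall t, a <= t <= b -> P t.
Proof.
move=> ab Pa left right.
pose S := [set s | a <= s <= b /\ forall u, a <= u <= s -> P u].
have Sa : S a.
  split; first by rewrite lexx ab.
  by move=> u /andP[au ua]; have -> : u = a by apply/eqP; rewrite eq_le ua au.
have ubS : has_ubound S by exists b => x [/andP[]].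
have supS : has_sup S by split; [exists a | exact: ubS].
set s0 := sup S.
have le_s0 x : S x -> x <= s0 by move=> Sx; apply: ub_le_sup.
have as0 : a <= s0 := le_s0 _ Sa.
have s0b : s0 <= b by apply: ge_sup; [exists a | move=> x [/andP[]]].
have P_below u : a <= u < s0 -> P u.
  move=> /andP[au us0]; have us0' : 0 < s0 - u by rewrite subr_gt0.
  have [s [_ Ps] us] := sup_adherent us0' supS.
  by apply: Ps; rewrite au /=; rewrite opprB addrCA subrr addr0 in us; exact: ltW.
have Ps0 : P s0.
  have [->|] := eqVneq s0 a; first exact: Pa.
  by rewrite neq_lt ltNge as0 /= => as0'; apply: left => //; rewrite as0' s0b.
have Ss0 : S s0.
  split; first by rewrite as0 s0b.
  move=> u /andP[au]; rewrite le_eqVlt => /orP[/eqP -> //|us0].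
  by apply: P_below; rewrite au us0.
have s0E : s0 = b.
  apply/eqP; rewrite eq_le s0b /= leNgt; apply/negP => s0b'.
  have as0b : a <= s0 < b by rewrite as0 s0b'.
  have [d d0 Pd] := right s0 as0b Ps0.
  pose u := Num.min b (s0 + d / 2).
  have s0u : s0 < u by rewrite lt_min s0b' ltrDl divr_gt0.
  have ub : u <= b by rewrite ge_min lexx.
  have Su : S u.
    split; first by rewrite ub (le_trans as0) ?ltW.
    move=> w /andP[aw wu]; have [ws0|s0w] := leP w s0; first by case: Ss0 => _; apply; rewrite aw.
    apply: Pd; first by rewrite s0w (le_trans wu).
    apply: le_lt_trans wu _; rewrite /u gt_min; apply/orP; right; lra.
  by move: (le_s0 _ Su); rewrite leNgt s0u.
by move=> t /andP[ta tb]; case: Ss0 => _; apply; rewrite ta s0E.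
Qed.

Lemma le0_of_self_halving (G : R -> R) (a b : R) : a <= b ->
  (forall t, a <= t <= b -> 0 <= G t <= 1) ->
  (forall M, 0 <= M <= 1 -> (forall t, a <= t <= b -> G t <= M) ->
     forall t, a <= t <= b -> G t <= M / 2) ->
  forall t, a <= t <= b -> G t <= 0.
Proof.
move=> ab G01 half.
pose SG := [set G t | t in [set t | a <= t <= b]].
have aab : a <= a <= b by rewrite lexx ab.
have SGne : SG !=set0 by exists (G a), a.
have ubSG : has_ubound SG by exists 1 => _ [t /G01 /andP[_ ?] <-].
have GM t : a <= t <= b -> G t <= sup SG by move=> ht; apply: ub_le_sup => //; exists t.
have M01 : 0 <= sup SG <= 1.
  have /andP[Ga0 _] := G01 a aab.
  by rewrite (le_trans Ga0 (GM a aab)) /=; apply: ge_sup => // _ [t /G01 /andP[_ ?] <-].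
have M_half : sup SG <= sup SG / 2.
  by apply: ge_sup => // _ [t ht <-]; exact: half M01 GM t ht.
by move=> t ht; have := half _ M01 GM t ht; lra.
Qed.

End RealInterval.

Section UpperDini.
Variable R : realType.
Implicit Types (H : R -> R) (A U : set R).

Definition disjoint_itvs m (s t : 'I_m -> R) :=
  forall i j, i != j -> t i <= s j \/ t j <= s i.

(** One-sided absolute continuity: only the sum of the increments, not of
    their absolute values, is controlled. *)
Definition upper_abs_cont H (a b : R) :=
  forall e : R, 0 < e -> exists d : R, 0 < d /\
    forall (m : nat) (s t : 'I_m -> R),
      (forall i, a <= s i /\ s i <= t i /\ t i <= b) -> disjoint_itvs s t ->
      \sum_(i < m) (t i - s i) < d -> \sum_(i < m) (H (t i) - H (s i)) < e.

Lemma upper_abs_cont_sub H a b a' b' : a <= a' -> b' <= b ->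
  upper_abs_cont H a b -> upper_abs_cont H a' b'.
Proof.
move=> aa' b'b hac e e0; have [d [d0 Hd]] := hac e e0; exists d; split => // m s t hst.
by apply: Hd => i; have [? [? ?]] := hst i; split; [|split] => //; lra.
Qed.

Lemma upper_abs_cont_incr H a b : upper_abs_cont H a b ->
  forall e, 0 < e -> exists d, 0 < d /\
    forall s t, a <= s -> s <= t -> t <= b -> t - s < d -> H t - H s < e.
Proof.
move=> hac e e0; have [d [d0 Hd]] := hac e e0; exists d; split => // s t sa st tb tsd.
have := Hd 1%N (fun=> s) (fun=> t) (fun=> conj sa (conj st tb)).
by rewrite !big_ord1; apply => // i j; rewrite (ord1 i) (ord1 j) eqxx.
Qed.

Lemma lebesgue_measure_itvoc (x y : R) : x <= y ->
  @lebesgue_measure R `]x, y]%classic = (y - x)%:E.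
Proof.
move=> xy; rewrite lebesgue_measure_itv /= lte_fin.
by case: ltP => // yx; apply/eqP; rewrite eq_le !lee_fin; apply/andP; split; lra.
Qed.

Lemma sum_itv_length_le_measure U m (s t : 'I_m -> R) : measurable U ->
  (forall i, s i <= t i) -> (forall i, `]s i, t i]%classic `<=` U) ->
  disjoint_itvs s t ->
  ((\sum_(i < m) (t i - s i))%:E <= @lebesgue_measure R U)%E.
Proof.
move=> mU st sU dis; rewrite -sumEFin.
rewrite (eq_bigr (fun i => lebesgue_measure `]s i, t i]%classic)); last first.
  by move=> i _; rewrite lebesgue_measure_itvoc.
rewrite -(measure_bigsetU_ord lebesgue_measure xpredT); last 2 first.
- by move=> i; exact: measurable_itv.
- move=> i j _ _ [x [/= + +]]; rewrite !in_itv /= => /andP[h1 h2] /andP[h3 h4].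
  case: (eqVneq i j) => // /dis [h|h].
    by move: (lt_le_trans (le_lt_trans h h3) h2); rewrite ltxx.
  by move: (lt_le_trans (le_lt_trans h h1) h4); rewrite ltxx.
apply: le_measure; rewrite ?inE //.
- by apply: bigsetU_measurable => i _; exact: measurable_itv.
- by apply: (big_ind (fun X => X `<=` U)) => // X Y XU YU z [/XU|/YU].
Qed.

Lemma null_set_open_cover A (d : R) :
  measurable A -> @lebesgue_measure R A = 0%E -> 0 < d ->
  exists U, [/\ open U, A `<=` U &
    forall m (s t : 'I_m -> R), (forall i, s i <= t i) ->
      (forall i, `]s i, t i]%classic `<=` U) -> disjoint_itvs s t ->
      \sum_(i < m) (t i - s i) < d].
Proof.
move=> mA A0 d0.
have Afin : (lebesgue_measure A < +oo)%E by rewrite A0 ltry.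
have [U [oU AU UAd]] := lebesgue_regularity_outer mA Afin d0.
have mU : measurable U := measurable_realfun.open_measurable oU.
exists U; split => // m s t st sU dis; rewrite -lte_fin.
apply: le_lt_trans (sum_itv_length_le_measure mU st sU dis) (le_lt_trans _ UAd).
have mUA : measurable (U `\` A) by exact: measurableD.
apply: (@le_trans _ _ (@lebesgue_measure R ((U `\` A) `|` A))).
  apply: le_measure; rewrite ?inE //; first exact: measurableU.
  by move=> x Ux; case: (pselect (A x)); [right|left].
apply: le_trans (measureU2 lebesgue_measure mUA mA) _.
suff -> : (@lebesgue_measure R (U `\` A) + @lebesgue_measure R A =
  @lebesgue_measure R (U `\` A))%E by [].
by rewrite A0 adde0.
Qed.

Section ExcessCovered.
Variables (H : R -> R) (a : R) (U : set R) (c : R).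

Definition excess_covered (th s : R) := exists m (ss tt : nat -> R),
  [/\ forall i, (i < m)%N ->
        [/\ a <= ss i, ss i <= tt i, tt i <= s & `]ss i, tt i]%classic `<=` U],
      forall i j, (i < m)%N -> (j < m)%N -> i != j -> tt i <= ss j \/ tt j <= ss i &
      H s - H a <= c * (s - a) + \sum_(i < m) (H (tt i) - H (ss i)) + th].

Lemma excess_covered_start th : 0 <= th -> excess_covered th a.
Proof.
by move=> th0; exists 0%N, (fun=> 0), (fun=> 0); split => //; rewrite big_ord0 !subrr mulr0 !add0r.
Qed.

Lemma excess_covered_slope th s u : s <= u -> H u - H s <= c * (u - s) ->
  excess_covered th s -> excess_covered th u.
Proof.
move=> su Hsu [m [ss [tt [Pin Pdis Pexc]]]]; exists m, ss, tt; split => //.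
  by move=> i im; have [? ? ? ?] := Pin i im; split => //; exact: le_trans su.
have : c * (u - a) = c * (s - a) + c * (u - s) by ring.
lra.
Qed.

Lemma excess_covered_cont th th' s u : 0 <= c -> s <= u -> H u - H s <= th' ->
  excess_covered th s -> excess_covered (th + th') u.
Proof.
move=> c0 su Hsu [m [ss [tt [Pin Pdis Pexc]]]]; exists m, ss, tt; split => //.
  by move=> i im; have [? ? ? ?] := Pin i im; split => //; exact: le_trans su.
have : c * (s - a) <= c * (u - a) by apply: ler_wpM2l => //; lra.
lra.
Qed.

Lemma excess_covered_itv th s u : 0 <= c -> a <= s -> s <= u ->
  `]s, u]%classic `<=` U -> excess_covered th s -> excess_covered th u.
Proof.
move=> c0 aS su sU [m [ss [tt [Pin Pdis Pexc]]]].
exists m.+1, (fun i => if i == m then s else ss i), (fun i => if i == m then u else tt i).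
split.
- move=> i; rewrite ltnS leq_eqVlt => /orP[/eqP ->|im]; first by rewrite eqxx.
  by rewrite (ltn_eqF im); have [? ? ? ?] := Pin i im; split => //; exact: le_trans su.
- move=> i j; rewrite ltnS leq_eqVlt => /orP[/eqP ->|im];
    rewrite ltnS leq_eqVlt => /orP[/eqP ->|jm] ij.
  + by rewrite eqxx in ij.
  + by rewrite eqxx (ltn_eqF jm); right; have [] := Pin j jm.
  + by rewrite eqxx (ltn_eqF im); left; have [] := Pin i im.
  + by rewrite (ltn_eqF im) (ltn_eqF jm); exact: Pdis.
- rewrite big_ord_recr /= eqxx.
  rewrite (eq_bigr (fun i : 'I_m => H (tt i) - H (ss i))); last first.
    by move=> i _; rewrite /= (ltn_eqF (ltn_ord i)).
  have : 0 <= c * (u - s) by apply: mulr_ge0; lra.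
  have : c * (u - a) = c * (s - a) + c * (u - s) by ring.
  lra.
Qed.

End ExcessCovered.

(** Outside the null set [A] the upper right Dini derivative of [H] is at most
    [L]; on the open cover [U] of [A] the increments of [H] are small by
    one-sided absolute continuity. *)
Lemma upper_dini_incr_le H A (a b L : R) :
  a <= b -> 0 <= L -> measurable A -> @lebesgue_measure R A = 0%E ->
  upper_abs_cont H a b ->
  (forall t, a <= t < b -> ~ A t -> forall e, 0 < e ->
     exists2 d, 0 < d & forall u, t < u < t + d -> H u - H t <= (L + e) * (u - t)) ->
  H b - H a <= L * (b - a).
Proof.
move=> ab L0 mA A0 hac dini; apply/ler_addgt0Pr => e e0.
have e3 : 0 < e / 3 by rewrite divr_gt0.
pose eps := e / 3 / (b - a + 1).
have eps0 : 0 < eps by rewrite divr_gt0 //; lra.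
have [d [d0 Hd]] := hac _ e3.
have [U [oU AU Ucov]] := null_set_open_cover mA A0 d0.
have c0 : 0 <= L + eps by lra.
have cover : forall t, a <= t <= b ->
    forall th, 0 < th -> excess_covered H a U (L + eps) th t.
  apply: real_induction => //.
  - by move=> th th0; apply: excess_covered_start; exact: ltW.
  - move=> s /andP[sa sb] Pbelow th th0.
    have th2 : 0 < th / 2 by rewrite divr_gt0.
    have [d1 [d10 Hd1]] := upper_abs_cont_incr hac th2.
    pose u := Num.max a (s - d1 / 2).
    have au : a <= u by rewrite le_max lexx.
    have us : u < s by rewrite gt_max sa /=; lra.
    have su : s - u < d1.
      have : s - d1 / 2 <= u by rewrite le_max lexx orbT.
      lra.
    have Hus : H s - H u <= th / 2 by apply/ltW/Hd1 => //; exact: ltW.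
    rewrite (splitr th); apply: excess_covered_cont (ltW us) Hus (Pbelow u _ _ th2) => //.
    by rewrite au.
  - move=> s /andP[sa sb] Ps; case: (pselect (A s)) => As.
    + move: oU; rewrite openE => /(_ _ (AU _ As)) /nbhs_ballP [r /= r0 rU].
      exists r => // u /andP[su ub] usr th th0.
      apply: excess_covered_itv (Ps th th0) => //; first exact: ltW.
      move=> x /=; rewrite in_itv /= => /andP[x1 x2]; apply: rU.
      by rewrite -ball_normE /ball_ /= distrC ger0_norm; lra.
    + have [dd dd0 Hdd] := dini s (introT andP (conj sa sb)) As eps eps0.
      exists dd => // u /andP[su ub] usd th th0.
      by apply: excess_covered_slope (Ps th th0); [exact: ltW | apply: Hdd; rewrite su].
have [m [ss [tt [Pin Pdis Pexc]]]] := cover b (introT andP (conj ab (lexx b))) _ e3.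
have sum_small : \sum_(i < m) (H (tt i) - H (ss i)) < e / 3.
  have st i : (i < m)%N -> ss i <= tt i by move=> im; have [] := Pin i im.
  apply: (Hd m (fun i => ss i) (fun i => tt i)).
  - by move=> i; have [? ? ? ?] := Pin i (ltn_ord i).
  - by move=> i j ij; apply: Pdis.
  - apply: Ucov; [by move=> i; exact: st | | by move=> i j ij; apply: Pdis].
    by move=> i; have [] := Pin i (ltn_ord i).
have : eps * (b - a) <= e / 3.
  by rewrite /eps mulrAC ler_pdivrMr ?ler_pM2l //; lra.
have : (L + eps) * (b - a) = L * (b - a) + eps * (b - a) by ring.
lra.
Qed.

End UpperDini.

Section SquaredDistance.
Variables (R : realType) (n : nat).
Local Notation V := 'rV[R]_n.
Local Notation q x := (dotv x x).
Implicit Types (K : set V) (z y w : V).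

Definition sqdist K z : R := inf [set q (z - w) | w in K].

Lemma sqdist_lbound K z : has_lbound [set q (z - w) | w in K].
Proof. by exists 0 => x [w _ <-]; exact: dotvv_ge0. Qed.

Lemma sqdist_le K z w : K w -> sqdist K z <= q (z - w).
Proof. by move=> Kw; apply: ge_inf; [exact: sqdist_lbound | exists w]. Qed.

Lemma sqdist_ge0 K z : K !=set0 -> 0 <= sqdist K z.
Proof.
move=> [w Kw]; apply: lb_le_inf; first by exists (q (z - w)), w.
by move=> x [w' _ <-]; exact: dotvv_ge0.
Qed.

Lemma sqdist_self K z : K z -> sqdist K z = 0.
Proof.
move=> Kz; apply/eqP; rewrite eq_le sqdist_ge0; last by exists z.
by rewrite andbT (le_trans (sqdist_le z Kz)) // subrr dotv0r.
Qed.

Lemma sqdist_approx K z e : K !=set0 -> 0 < e ->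
  exists2 w, K w & q (z - w) < sqdist K z + e.
Proof.
move=> [w0 Kw0] e0; have Kq : [set q (z - w) | w in K] !=set0 by exists (q (z - w0)), w0.
by have [_ [w Kw <-]] := inf_adherent e0 (conj Kq (sqdist_lbound K z)); exists w.
Qed.

Lemma sqdist_nearest K z y : K y -> (forall w, K w -> q (z - y) <= q (z - w)) ->
  sqdist K z = q (z - y).
Proof.
move=> Ky Hy; apply/eqP; rewrite eq_le sqdist_le //=.
apply: lb_le_inf; first by exists (q (z - y)), y.
by move=> x [w Kw <-]; exact: Hy.
Qed.

Lemma closed_approx K z : closed K ->
  (forall e, 0 < e -> exists2 w, K w & q (z - w) <= e) -> K z.
Proof.
move=> clK Happrox; apply: clK => B /nbhs_ballP [r /= r0 rB].
have r2 : 0 < r / 2 by rewrite divr_gt0.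
have [w Kw hw] := Happrox _ (mulr_gt0 r2 r2).
exists w; split => //; apply: rB; rewrite -ball_normE /ball_ /=.
apply: le_lt_trans (_ : r / 2 < r); last by lra.
by apply: normr_le_dotvv; [exact: ltW | rewrite expr2].
Qed.

Lemma sqdist_le0 K z : closed K -> K !=set0 -> sqdist K z <= 0 -> K z.
Proof.
move=> clK Kne d0; apply: closed_approx => // e e0.
by have [w Kw hw] := sqdist_approx z Kne e0; exists w => //; lra.
Qed.

(** The constant [6 n] absorbs the comparison of [dotv] with the sup norm. *)
Lemma sqdist_lipschitz K z z' : K !=set0 -> sqdist K z <= 1 -> `|z' - z| <= 2 ->
  sqdist K z' - sqdist K z <= 6 * n%:R * `|z' - z|.
Proof.
move=> Kne d1 hD; apply/ler_addgt0Pr => e e0.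
have e'0 : 0 < Num.min e 1 by rewrite lt_min e0 ltr01.
have [w Kw hw] := sqdist_approx z Kne e'0.
have e'1 : Num.min e 1 <= 1 by rewrite ge_min lexx orbT.
have e'e : Num.min e 1 <= e by rewrite ge_min lexx.
set a := z - w; set D := z' - z.
have ha : `|a| <= 2 by apply: normr_le_dotvv => //; lra.
have h1 := sqdist_le z' Kw.
have zwE : z' - w = a + D by rewrite /a /D [RHS]addrC addrA subrK.
rewrite zwE dotvvD in h1.
have h2 : dotv a D <= n%:R * (2 * `|D|).
  apply: le_trans (ler_norm _) _; apply: le_trans (normr_dotv_le _ _) _.
  by apply: ler_wpM2l => //; apply: ler_wpM2r.
have h3 : dotv D D <= n%:R * (2 * `|D|).
  apply: le_trans (dotvv_le_normr _) _; rewrite expr2.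
  by apply: ler_wpM2l => //; apply: ler_wpM2r.
nra.
Qed.

Lemma segment_meets_boundary K z w : closed K -> ~ K z -> K w ->
  exists2 s : R, 0 <= s <= 1 & boundary K (z + s *: (w - z)).
Proof.
move=> clK nKz Kw.
pose S := [set s : R | 0 <= s <= 1 /\ K (z + s *: (w - z))].
have S1 : S 1 by split; [rewrite ler01 lexx | rewrite scale1r addrC subrK].
have lbS : has_lbound S by exists 0 => x [/andP[]].
have Sne : S !=set0 by exists 1.
set s1 := inf S.
have s1_le s : S s -> s1 <= s by move=> Ss; apply: ge_inf.
have s10 : 0 <= s1 by apply: lb_le_inf => // x [/andP[]].
have s11 : s1 <= 1 := s1_le _ S1.
pose p := z + s1 *: (w - z).
have pE s : p - (z + s *: (w - z)) = (s1 - s) *: (w - z).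
  by rewrite /p scalerBl opprD addrACA subrr add0r.
have Kp : K p.
  apply: closed_approx => // e e0.
  set Q := q (w - z); have Q0 : 0 <= Q by exact: dotvv_ge0.
  pose e' := Num.min 1 (e / (Q + 1)).
  have e'0 : 0 < e' by rewrite lt_min ltr01 divr_gt0 //; lra.
  have e'1 : e' <= 1 by rewrite ge_min lexx.
  have e'Q : e' * (Q + 1) <= e by rewrite -ler_pdivlMr ?ge_min ?lexx ?orbT //; lra.
  have [s [/andP[s0 s1'] Ks] hs] := inf_adherent e'0 (conj Sne lbS).
  exists (z + s *: (w - z)) => //.
  have ss1 := s1_le s (conj (introT andP (conj s0 s1')) Ks).
  rewrite pE dotvvZ -/Q.
  have h1 : (s1 - s) ^+ 2 <= e' by rewrite expr2; nra.
  have : (s1 - s) ^+ 2 * Q <= e' * Q by apply: ler_wpM2r.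
  lra.
have nIp : ~ interior K p.
  move=> /nbhs_ballP [r /= r0 rK].
  have s1pos : 0 < s1.
    rewrite lt_def s10 andbT; apply/eqP => s1z.
    by apply: nKz; move: Kp; rewrite /p s1z scale0r addr0.
  set W := `|w - z|; have W0 : 0 <= W by exact: normr_ge0.
  pose m := Num.min s1 (r / (W + 1)).
  have m0 : 0 < m by rewrite lt_min s1pos divr_gt0 //; lra.
  have m1 : m <= s1 by rewrite ge_min lexx.
  have hm : m * (W + 1) <= r by rewrite -ler_pdivlMr ?ge_min ?lexx ?orbT //; lra.
  have Ks' : K (z + (s1 - m / 2) *: (w - z)).
    apply: rK; rewrite -ball_normE /ball_ /= pE normrZ ger0_norm; last by lra.
    rewrite (_ : s1 - (s1 - m / 2) = m / 2); last by ring.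
    by rewrite -/W; clearbody W; nra.
  by have := s1_le _ (conj (introT andP (conj (_ : 0 <= s1 - m / 2) _)) Ks'); lra.
by exists s1; [rewrite s10 | split => //; exact: subset_closure].
Qed.

Lemma nearest_boundary_nearest K z y : closed K -> ~ K z ->
  (forall p, boundary K p -> q (z - y) <= q (z - p)) ->
  forall w, K w -> q (z - y) <= q (z - w).
Proof.
move=> clK nKz Hy w Kw; have [s /andP[s0 s1] bp] := segment_meets_boundary clK nKz Kw.
apply: le_trans (Hy _ bp) _.
rewrite (_ : z - _ = s *: (z - w)); last by rewrite opprD addrA subrr add0r -scalerN opprB.
rewrite dotvvZ; have := dotvv_ge0 (z - w); have : s ^+ 2 <= 1 by rewrite expr2; nra.
nra.
Qed.

Lemma contingent_nearest_dotv_le0 K z y v : K y ->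
  (forall w, K w -> q (z - y) <= q (z - w)) ->
  contingent K y v -> dotv (z - y) v <= 0.
Proof.
move=> Ky Hy [t [w [t0 [tc [wc Kt]]]]]; set P := z - y.
have key i : 2 * dotv P (w i) <= t i * q (w i).
  have := Hy _ (Kt i).
  have -> : z - (y + t i *: w i) = P + - (t i *: w i) by rewrite /P opprD addrA.
  rewrite [X in _ <= X]dotvvD dotvvN dotvvZ dotvNr dotvZr expr2 => h.
  by rewrite -(ler_pM2l (t0 i)); nra.
rewrite leNgt; apply/negP => p0; set p := dotv P v in p0.
have n0 := ler0n R n.
set NP := `|P|; set Nv := `|v|.
have NP0 : 0 <= NP by exact: normr_ge0.
have Nv0 : 0 <= Nv by exact: normr_ge0.
pose e1 := Num.min 1 (p / 2 / (n%:R * NP + 1)).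
have e10 : 0 < e1 by rewrite lt_min ltr01 !divr_gt0 //; nra.
have e11 : e1 <= 1 by rewrite ge_min lexx.
have e1p : e1 * (n%:R * NP + 1) <= p / 2.
  by rewrite -ler_pdivlMr ?ge_min ?lexx ?orbT //; nra.
pose Q := n%:R * (Nv + 1) ^+ 2 + 1.
have Q0 : 0 < Q by rewrite /Q; nra.
have e20 : 0 < p / 2 / Q by rewrite !divr_gt0.
have near_w : \forall j \near \oo, `|v - w j| < e1 by move/cvgrPdist_lt : wc; apply.
have near_t : \forall j \near \oo, `|0 - t j| < p / 2 / Q by move/cvgrPdist_lt : tc; apply.
have [i [/= hw ht]] := filter_ex (filterI near_w near_t).
have wiE : w i = v + (w i - v) by rewrite addrC subrK.
have hwv : `|w i - v| < e1 by rewrite distrC.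
have hti : t i < p / 2 / Q by move: ht; rewrite sub0r normrN ger0_norm //; exact: ltW.
have dotv_wi : p / 2 <= dotv P (w i).
  rewrite wiE dotvDr -/p.
  have := ler_norm (- dotv P (w i - v)); rewrite normrN.
  have := normr_dotv_le P (w i - v); rewrite -/NP.
  have : n%:R * (NP * `|w i - v|) <= n%:R * (NP * e1).
    by rewrite ler_wpM2l // ler_wpM2l // ltW.
  nra.
have qw : q (w i) <= n%:R * (Nv + 1) ^+ 2.
  have nw : `|w i| <= Nv + 1.
    by rewrite wiE; apply: le_trans (ler_normD _ _) _; rewrite -/Nv; lra.
  apply: le_trans (dotvv_le_normr _) _; rewrite ler_wpM2l // !expr2.
  by apply: ler_pM => //; exact: normr_ge0.
have tq : t i * q (w i) < p / 2.
  have : t i * q (w i) <= t i * (n%:R * (Nv + 1) ^+ 2).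
    by apply: ler_wpM2l => //; exact: ltW.
  have : t i * Q < p / 2 by rewrite -ltr_pdivlMr.
  rewrite /Q; have := t0 i; nra.
by have := key i; lra.
Qed.

Lemma sqdist_incr_le K z y D : K y -> sqdist K z = q (z - y) ->
  sqdist K (z + D) - sqdist K z <= 2 * dotv (z - y) D + q D.
Proof.
move=> Ky dE; have := sqdist_le (z + D) Ky.
have -> : z + D - y = (z - y) + D by rewrite addrAC.
by rewrite dotvvD dE; lra.
Qed.

Lemma derivable_incr_approx (phi : R -> V) s (e : R) : derivable phi s 1 -> 0 < e ->
  exists2 r, 0 < r &
    forall h, 0 < h < r -> `|phi (s + h) - phi s - h *: 'D_1 phi s| <= h * e.
Proof.
move=> der e0.
have cv : (fun h => h^-1 *: (phi (h + s) - phi s)) @ 0^' --> 'D_1 phi s.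
  rewrite /derive; have -> : (fun h : R => h^-1 *: (phi (h + s) - phi s)) =
      (fun h => h^-1 *: ((phi \o shift s) h%:A - phi s)).
    by apply: funext => h; rewrite /= /shift [h%:A]mulr1.
  exact: der.
have /nbhs_ballP [r /= r0 hr] :
    \forall h \near 0^', `|'D_1 phi s - h^-1 *: (phi (h + s) - phi s)| < e.
  by move/cvgrPdist_lt : cv; apply.
exists r => // h /andP[h0 hr'].
have := hr h; rewrite -ball_normE /ball_ /= sub0r normrN ger0_norm; last exact: ltW.
move=> /(_ hr' (lt0r_neq0 h0)) hlt.
have {}hlt : `|h^-1 *: (phi (s + h) - phi s) - 'D_1 phi s| < e.
  by rewrite distrC (addrC s h).
rewrite (_ : _ - h *: _ = h *: (h^-1 *: (phi (s + h) - phi s) - 'D_1 phi s)).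
  by rewrite normrZ ger0_norm; [apply: ler_wpM2l; exact: ltW | exact: ltW].
by rewrite scalerBr scalerA divff ?gt_eqF // scale1r.
Qed.

Lemma sqdist_dini_le K (phi : R -> V) s y c : derivable phi s 1 ->
  K y -> sqdist K (phi s) = q (phi s - y) -> dotv (phi s - y) ('D_1 phi s) <= c ->
  `|phi s - y| <= 1 ->
  forall e, 0 < e -> exists2 d, 0 < d & forall u, s < u < s + d ->
    sqdist K (phi u) - sqdist K (phi s) <= (2 * c + e) * (u - s).
Proof.
move=> der Ky dE dc P1 e e0; have n0 := ler0n R n.
pose e1 := e / (4 * (n%:R + 1)).
have e10 : 0 < e1 by rewrite divr_gt0 //; lra.
have e1e : 2 * n%:R * e1 <= e / 2.
  rewrite /e1 mulrA ler_pdivrMr; last by lra.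
  have : 0 <= e * n%:R by nra.
  nra.
have [r r0 approx] := derivable_incr_approx der e10.
set v := 'D_1 phi s in dc approx; set P := phi s - y in dE dc P1.
pose W := `|v| + e1; have W0 : 0 <= W by rewrite /W; have := normr_ge0 v; lra.
pose Q := 2 * (n%:R * W ^+ 2 + 1); have Q0 : 0 < Q by rewrite /Q; nra.
pose d := Num.min r (e / Q).
exists d => [|u /andP[su usd]]; first by rewrite lt_min r0 divr_gt0.
set h := u - s; have h0 : 0 < h by rewrite /h subr_gt0.
have hr' : h < r.
  have : d <= r by rewrite ge_min lexx.
  rewrite /h; lra.
have he : h * Q <= e.
  rewrite -ler_pdivlMr //; have : d <= e / Q by rewrite ge_min lexx orbT.
  rewrite /h; lra.
rewrite (_ : u = s + h); last by rewrite /h addrC subrK.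
set D := phi (s + h) - phi s.
have hD : `|D - h *: v| <= h * e1 by apply: approx; rewrite h0.
have hDn : `|D| <= h * W.
  rewrite -(subrK (h *: v) D); apply: le_trans (ler_normD _ _) _.
  rewrite normrZ ger0_norm; last exact: ltW.
  by rewrite /W; nra.
have dotPD : dotv P D <= h * c + n%:R * (h * e1).
  rewrite -(subrK (h *: v) D) dotvDr dotvZr.
  have : h * dotv P v <= h * c by apply: ler_wpM2l => //; exact: ltW.
  have : dotv P (D - h *: v) <= n%:R * (h * e1).
    apply: le_trans (ler_norm _) (le_trans (normr_dotv_le _ _) _).
    by apply: ler_wpM2l => //; rewrite -[leRHS]mul1r; apply: ler_pM => //; exact: normr_ge0.
  lra.
have qD : q D <= h * (e / 2).
  apply: le_trans (dotvv_le_normr _) _.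
  have : n%:R * `|D| ^+ 2 <= n%:R * (h * W) ^+ 2.
    apply: ler_wpM2l => //; rewrite !expr2; apply: ler_pM => //; exact: normr_ge0.
  have : h * (n%:R * W ^+ 2) <= e / 2 by rewrite /Q in he; nra.
  have : n%:R * (h * W) ^+ 2 = h * (h * (n%:R * W ^+ 2)) by ring.
  nra.
have : h * (2 * n%:R * e1) <= h * (e / 2) by apply: ler_wpM2l => //; exact: ltW.
have := sqdist_incr_le D Ky dE.
rewrite (_ : phi s + D = phi (s + h)); last by rewrite /D addrC subrK.
nra.
Qed.
End SquaredDistance.

Section Curves.
Variables (R : realType) (n : nat).
Local Notation V := 'rV[R]_n.
Local Notation q x := (dotv x x).
Implicit Types (K : set V) (phi : R -> V).

Lemma abs_cont_on_incr phi a b : abs_cont_on phi a b ->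
  forall e, 0 < e -> exists d, 0 < d /\ forall s t, a <= s -> s <= t -> t <= b ->
    t - s < d -> enorm (phi t - phi s) < e.
Proof.
move=> ac e e0; have [d [d0 Hd]] := ac e e0; exists d; split => // s t sa st tb tsd.
have := Hd 1%N (fun=> s) (fun=> t) (fun=> conj sa (conj st tb)).
by rewrite !big_ord1; apply => // i j; rewrite (ord1 i) (ord1 j) eqxx.
Qed.

Lemma abs_cont_closed_left K phi a b s : closed K -> abs_cont_on phi a b ->
  a < s <= b -> (forall u, a <= u < s -> K (phi u)) -> K (phi s).
Proof.
move=> clK ac /andP[aS sb] Kbelow; apply: closed_approx => // e e0.
have e1 : 0 < Num.min 1 e by rewrite lt_min ltr01.
have [d [d0 Hd]] := abs_cont_on_incr ac e1.
pose u := Num.max a (s - d / 2).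
have au : a <= u by rewrite le_max lexx.
have us : u < s by rewrite gt_max aS /=; lra.
have su : s - u < d.
  have : s - d / 2 <= u by rewrite le_max lexx orbT.
  lra.
exists (phi u); first by apply: Kbelow; rewrite au us.
have := Hd u s au (ltW us) sb su; rewrite -enorm_sq expr2.
have := enorm_ge0 (phi s - phi u).
have : Num.min 1 e <= 1 by rewrite ge_min lexx.
have : Num.min 1 e <= e by rewrite ge_min lexx orbT.
nra.
Qed.

Lemma sqdist_comp_upper_abs_cont K phi a b : K !=set0 -> abs_cont_on phi a b ->
  (forall t, a <= t <= b -> sqdist K (phi t) <= 1 /\ `|phi a - phi t| <= 1) ->
  upper_abs_cont (fun t => sqdist K (phi t)) a b.
Proof.
move=> Kne ac near_a eta eta0; have n0 := ler0n R n.
have eta' : 0 < eta / (6 * n%:R + 1) by rewrite divr_gt0 //; lra.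
have [d [d0 Hd]] := ac _ eta'.
exists d; split => // m s t hst dis sl.
apply: le_lt_trans (_ : _ <= 6 * n%:R * \sum_(i < m) enorm (phi (t i) - phi (s i))) _.
  rewrite mulr_sumr; apply: ler_sum => i _.
  have [sa [st tb]] := hst i.
  have [Gs ns] := near_a (s i) (introT andP (conj sa (le_trans st tb))).
  have [_ nt] := near_a (t i) (introT andP (conj (le_trans sa st) tb)).
  apply: le_trans (sqdist_lipschitz (z' := phi (t i)) Kne Gs _) _.
    have -> : phi (t i) - phi (s i) = (phi a - phi (s i)) - (phi a - phi (t i)).
      by rewrite [RHS]addrC opprB addrA subrK.
    by apply: le_trans (ler_normB _ _) _; lra.
  by rewrite ler_wpM2l ?normr_le_enorm //; lra.
apply: le_lt_trans (_ : 6 * n%:R * (eta / (6 * n%:R + 1)) < eta).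
  by apply: ler_wpM2l; [lra | exact/ltW/Hd].
by rewrite mulrA ltr_pdivrMr; nra.
Qed.

Definition one_sided_lipschitz_on (N : set V) (F : V -> set V) (k : R) :=
  forall x1 x2, N x1 -> N x2 -> forall v1, F x1 v1 ->
    exists v2, F x2 v2 /\ exists b : R, -1 <= b <= 1 /\
      dotv (x1 - x2) v1 = dotv (x1 - x2) v2 + k * enorm (x1 - x2) ^+ 2 * b.

Lemma one_sided_lipschitz_closed_ball (C : set V) (F : V -> set V) z (r : R) :
  closed C -> (forall x, C x -> F x !=set0) -> one_sided_loc_lipschitz F ->
  C z -> 0 < r ->
  exists2 k : R, 0 < k & one_sided_lipschitz_on [set x | C x /\ `|z - x| <= r] F k.
Proof.
move=> clC FC osl Cz r0.
have [|||k [k0 Hk]] := osl (C `&` closed_ball z r).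
- by exists z; split => //; rewrite closed_ballE // /closed_ball_ /= subrr normr0 ltW.
- apply: bounded_closed_compact; last by apply: closedI => //; exact: closed_ball_closed.
  apply: filterS (nbhs_pinfty_ge (r := `|z| + r) (num_real _)) => // M hM x [_].
  rewrite closed_ballE // /closed_ball_ /= => hx; apply: le_trans hM.
  have := ler_normB z (z - x); rewrite opprB addrC subrK; lra.
- by move=> x [Cx _]; exact: FC.
by exists k => // x1 x2 [Cx1 x1z] [Cx2 x2z]; apply: Hk; split => //; rewrite closed_ballE.
Qed.

Lemma proj_boundary_nearest K z y : closed K -> ~ K z -> Proj (boundary K) z y ->
  K y /\ forall w, K w -> q (z - y) <= q (z - w).
Proof.
move=> clK nKz [[cly _] Py]; split; first exact: clK.
by apply: nearest_boundary_nearest => // p bp; apply: dotvv_le_enorm; exact: Py.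
Qed.

(** The one-sided Lipschitz bound compares the velocity [v] at [z] with some
    [v2] in [F y], and [v2] is tangent at the nearest point [y]. *)
Lemma proj_boundary_dotv_le (F : V -> set V) K z y v (k : R) :
  closed K -> ~ K z -> Proj (boundary K) z y -> F y `<=` contingent K y -> 0 <= k ->
  (exists v2, F y v2 /\ exists b : R, -1 <= b <= 1 /\
     dotv (z - y) v = dotv (z - y) v2 + k * enorm (z - y) ^+ 2 * b) ->
  dotv (z - y) v <= k * sqdist K z.
Proof.
move=> clK nKz Py tang k0 [v2 [Fv2 [b [/andP[_ b1] ->]]]].
have [Ky near] := proj_boundary_nearest clK nKz Py.
have := contingent_nearest_dotv_le0 Ky near (tang _ Fv2).
rewrite enorm_sq -(sqdist_nearest Ky near).
have : 0 <= k * sqdist K z by rewrite mulr_ge0 // sqdist_ge0 //; exists y.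
nra.
Qed.
End Curves.

Section Viability.
Variables (R : realType) (n : nat).
Local Notation V := 'rV[R]_n.
Local Notation q x := (dotv x x).
Variables (C K : set V) (F : V -> set V) (phi : R -> V) (D : set R) (T : R) (A : set R).
Hypotheses (clK : closed K) (clC : closed C) (FC : forall x, C x -> F x !=set0).
Hypothesis osl : one_sided_loc_lipschitz F.
Hypothesis tang : forall y, boundary K y -> interior C y -> F y `<=` contingent K y.
Hypotheses (inC : forall t, D t -> C (phi t)) (acD : loc_abs_cont_on phi D).
Hypotheses (mA : measurable A) (A0 : @lebesgue_measure R A = 0%E).
Hypothesis HA : forall t, ~ A t -> D t -> derivable phi t 1 /\ F (phi t) ('D_1 phi t).
Hypothesis D0T : forall t, 0 <= t <= T -> D t.
Hypothesis star :
  forall t, 0 < t <= T -> Proj (boundary K) (phi t) `&` interior C !=set0.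

Lemma sqdist_dini_on a b k M : 0 <= a -> b <= T -> K (phi a) -> 0 < k ->
  one_sided_lipschitz_on [set x | C x /\ `|phi a - x| <= 3] F k ->
  (forall t, a <= t <= b -> `|phi a - phi t| <= 1 /\ sqdist K (phi t) <= M) ->
  M <= 1 ->
  forall s, a <= s < b -> ~ A s -> forall e, 0 < e ->
    exists2 d, 0 < d & forall u, s < u < s + d ->
      sqdist K (phi u) - sqdist K (phi s) <= (2 * k * M + e) * (u - s).
Proof.
move=> a0 bT Ka k0 oslk near_a M1 s /andP[sa sb] nAs; rewrite -mulrA.
have sT : 0 <= s <= T by apply/andP; split; lra.
have [der Fv] := HA nAs (D0T sT).
have [near_s Gs] := near_a s (introT andP (conj sa (ltW sb))).
have Kne : K !=set0 by exists (phi a).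
suff [y [Ky dE dc ys]] : exists y, [/\ K y, sqdist K (phi s) = q (phi s - y),
    dotv (phi s - y) ('D_1 phi s) <= k * M & `|phi s - y| <= 1].
  by move=> e e0; exact: (sqdist_dini_le der Ky dE dc ys).
have [Ks|nKs] := pselect (K (phi s)).
  exists (phi s); rewrite subrr sqdist_self // dotvC !dotv0r normr0 ler01; split => //.
  by apply: mulr_ge0; [exact: ltW | exact: le_trans (sqdist_ge0 _ Kne) Gs].
have sna : s != a by apply/eqP => sa'; apply: nKs; rewrite sa'.
have s0 : 0 < s by move: sna; rewrite neq_lt => /orP[h|h]; lra.
have [y [Py Cy]] := star (introT andP (conj s0 (andP sT).2)).
have [Ky near] := proj_boundary_nearest clK nKs Py.
have dE := sqdist_nearest Ky near.
have ys : `|phi s - y| <= 1 by apply: normr_le_dotvv; rewrite ?ler01 // expr1n -dE; lra.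
exists y; split => //.
apply: le_trans (proj_boundary_dotv_le clK nKs Py (tang Py.1 Cy) (ltW k0) _) _.
  apply: oslk Fv; split; [exact: inC (D0T sT) | lra | exact: interior_subset |].
  rewrite -(subrK (phi s) (phi a)) -addrA.
  by apply: le_trans (ler_normD _ _) _; lra.
by apply: ler_wpM2l => //; exact: ltW.
Qed.

Lemma viable_step a : 0 <= a < T -> K (phi a) ->
  exists2 tau, 0 < tau & forall t, a <= t <= a + tau -> K (phi t).
Proof.
move=> /andP[a0 aT] Ka; have Kne : K !=set0 by exists (phi a).
have Ca : C (phi a) by apply: inC; apply: D0T; rewrite a0 ltW.
have [k k0 oslk] := one_sided_lipschitz_closed_ball clC FC osl Ca (ltr0n R 3).
have acT : abs_cont_on phi 0 T by apply: acD; [lra | move=> t /D0T].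
have [d1 [d10 Hd1]] := abs_cont_on_incr acT ltr01.
pose tau := Num.min (T - a) (Num.min (d1 / 2) (4 * k)^-1).
have tau0 : 0 < tau by rewrite !lt_min subr_gt0 aT divr_gt0 // invr_gt0; lra.
have tauT : a + tau <= T.
  have : tau <= T - a by rewrite ge_min lexx.
  lra.
have taud : tau < d1.
  have : tau <= d1 / 2 by rewrite !ge_min lexx orbT.
  lra.
have tauk : 4 * k * tau <= 1.
  have : tau <= (4 * k)^-1 by rewrite !ge_min lexx !orbT.
  by rewrite -(ler_pM2l (_ : 0 < 4 * k)) ?mulfV ?gt_eqF //; lra.
exists tau => //; set b := a + tau; pose G t := sqdist K (phi t).
have ab : a <= b by rewrite /b; lra.
have near_a t : a <= t <= b -> G t <= 1 /\ `|phi a - phi t| <= 1.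
  move=> /andP[ta tb].
  have en : enorm (phi t - phi a) < 1.
    by apply: Hd1 => //; [exact: le_trans tb tauT | rewrite /b in tb; lra].
  split.
    apply: le_trans (sqdist_le _ Ka) _; rewrite -enorm_sq expr2.
    by have := enorm_ge0 (phi t - phi a); nra.
  by rewrite -normrN opprB; apply: le_trans (normr_le_enorm _) (ltW en).
have Gac : upper_abs_cont G a b.
  apply: sqdist_comp_upper_abs_cont Kne _ near_a.
  by apply: acD => // t /andP[ta tb]; apply: D0T; rewrite (le_trans a0 ta) (le_trans tb tauT).
move=> t ht; apply: sqdist_le0 => //; move: t ht.
apply: (le0_of_self_halving ab) => [t ht|M /andP[M0 M1] GM t /andP[ta tb]].
  by rewrite sqdist_ge0 //= (near_a t ht).1.
have near_a' s : a <= s <= b -> `|phi a - phi s| <= 1 /\ G s <= M.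
  by move=> hs; split; [exact: (near_a s hs).2 | exact: GM].
have dini := sqdist_dini_on a0 tauT Ka k0 oslk near_a' M1.
have L0 : 0 <= 2 * k * M by rewrite !mulr_ge0 // ltW.
have : G t - G a <= 2 * k * M * (t - a).
  apply: upper_dini_incr_le ta L0 mA A0 (upper_abs_cont_sub (lexx a) tb Gac) _.
  by move=> s /andP[sa st]; apply: dini; rewrite sa (lt_le_trans st tb).
rewrite /G (sqdist_self Ka) subr0.
have : 2 * k * M * (t - a) <= 2 * k * M * tau by apply: ler_wpM2l; rewrite /b in tb; lra.
nra.
Qed.

End Viability.

Section Solutions.
Variable R : realType.

Lemma ae_lebesgue_null_set (P : R -> Prop) :
  (\forall t \ae (@lebesgue_measure R), P t) ->
  exists A, [/\ measurable A, @lebesgue_measure R A = 0%E & forall t, ~ A t -> P t].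
Proof.
case=> A [mA A0 HA]; exists A; split => // t nAt.
by apply: contrapT => nPt; apply: nAt; exact: HA.
Qed.

Lemma solution_domain_itv (D : set R) (T : R) : solution_domain D -> D T ->
  forall t, 0 <= t <= T -> D t.
Proof.
move=> [[T' [_ ->]]|[T' [_ ->]]] /= DT t /andP[t0 tT].
  by case/andP: DT => _ TT'; rewrite t0 (le_trans tT).
by split => //; case: DT => _; apply: le_lt_trans; rewrite lee_fin.
Qed.

End Solutions.

Unset Implicit Arguments. Set Strict Implicit.

Theorem proposition2 (R : realType) (n : nat) (C K : set 'rV[R]_n)
    (F : 'rV[R]_n -> set 'rV[R]_n) (phi : R -> 'rV[R]_n) (D : set R) (T : R) :
  closed K ->
  standing_assumption C F ->
  (forall y, boundary K y -> interior C y -> F y `<=` contingent K y) ->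
  is_solution C F phi D ->
  boundary K (phi 0) ->
  0 < T ->
  [set t | 0 < t <= T] `<=` D ->
  (forall t, 0 < t <= T -> Proj (boundary K) (phi t) `&` interior C !=set0) ->
  phi @` [set t | 0 <= t <= T] `<=` K /\ ~ leaves_immediately C K phi D.
Proof.
move=> clK [clC Fp _ osl] tang [dom acD inC /ae_lebesgue_null_set [A [mA A0 HA]]].
move=> [K0 _] T0 sub star; have {}K0 : K (phi 0) by apply: clK.
have FC x : C x -> F x !=set0 by case/Fp.
have D0T := solution_domain_itv dom (sub T (introT andP (conj T0 (lexx T)))).
have acT : abs_cont_on phi 0 T by apply: acD; [exact: ltW | move=> t /D0T].
have viable : forall t, 0 <= t <= T -> K (phi t).
  apply: (real_induction (P := fun t => K (phi t))) (ltW T0) K0 _ _.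
    by move=> s hs; apply: abs_cont_closed_left clK acT hs.
  move=> s hs Ks.
  have [tau tau0 Htau] := viable_step clK clC FC osl tang inC acD mA A0 HA D0T star hs Ks.
  by exists tau => // u /andP[su _] usd; apply: Htau; rewrite ltW //= ltW.
split; first by move=> _ [t ht <-]; exact: viable.
move=> [T' [T'0 [_ leaves]]]; pose t := Num.min T T'.
have t0 : 0 < t by rewrite lt_min T0.
have tT' : t <= T' by rewrite ge_min lexx orbT.
have [_ nKt] := leaves t (introT andP (conj t0 tT')).
by apply/nKt/viable; rewrite ltW //= ge_min lexx.
Qed.
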